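(* The two identities $(xy)(zt)=(ty)(zx)$ and $x(xy)=y$ form an independent basis for $\Sigma_{2,4}$.
   Context: $\Sigma_{2,4}$ is the set of groupoid identities satisfied in the integers $\mathbb{Z}$ by both binary operations $x-y$ and $-x-y$. A basis is a set of identities whose equational consequences are exactly $\Sigma_{2,4}$; it is independent if no member is a consequence of the others. *)

From Stdlib Require Import ZArith.

Inductive term : Type :=
| Var : nat -> term
| Op : term -> term -> term.

Definition identity : Type := (term * term)%type.

Fixpoint eval {A : Type} (op : A -> A -> A) (v : nat -> A) (t : term) : A :=
  match t with
  | Var n => v n
  | Op s u => op (eval op v s) (eval op v u)
  end.

Definition satisfies {A : Type} (op : A -> A -> A) (e : identity) : Prop :=
  forall v : nat -> A, eval op v (fst e) = eval op v (snd e).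

Definition Sigma24 (e : identity) : Prop :=
  satisfies Z.sub e /\ satisfies (fun x y => (- x - y)%Z) e.

Fixpoint subst (s : nat -> term) (t : term) : term :=
  match t with
  | Var n => s n
  | Op a b => Op (subst s a) (subst s b)
  end.

Inductive derivable (E : identity -> Prop) : term -> term -> Prop :=
| der_ax : forall e, E e -> derivable E (fst e) (snd e)
| der_refl : forall t, derivable E t t
| der_sym : forall t u, derivable E t u -> derivable E u t
| der_trans : forall t u w, derivable E t u -> derivable E u w -> derivable E t w
| der_subst : forall (s : nat -> term) t u,
    derivable E t u -> derivable E (subst s t) (subst s u)
| der_cong : forall t1 u1 t2 u2,
    derivable E t1 u1 -> derivable E t2 u2 -> derivable E (Op t1 t2) (Op u1 u2).

Definition is_basis_Sigma24 (E : identity -> Prop) : Prop :=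
  forall e : identity, derivable E (fst e) (snd e) <-> Sigma24 e.

Definition independent (E : identity -> Prop) : Prop :=
  forall e : identity, E e -> ~ derivable (fun f => E f /\ f <> e) (fst e) (snd e).

Definition vx := Var 0.
Definition vy := Var 1.
Definition vz := Var 2.
Definition vt := Var 3.

Definition id_medial_like : identity :=
  (Op (Op vx vy) (Op vz vt), Op (Op vt vy) (Op vz vx)).

Definition id_inv : identity := (Op vx (Op vx vy), vy).

Definition basis_3_2 (e : identity) : Prop := e = id_medial_like \/ e = id_inv.

(* Write [shift a b] for the map y |-> a(by).  From the two identities, shifts
   commute, [shift b a] inverts [shift a b], and multiplying a shifted term on
   either side by a term turns the shift into another shift.  Hence every term
   is a word in shifts from a fixed alphabet applied to the variable x0, and two
   words applied to the same term agree once every letter has the same total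
   exponent in both.  In each of the two integer models a shift adds a
   constant, and evaluating at the indicator valuations and at the constant
   valuation 1 reads off all exponents, so an identity of Sigma_{2,4} relates
   terms with equal exponents.  Independence: the groupoid xy = y satisfies
   x(xy) = y but not the first identity, and the constant groupoid satisfies
   the first identity but not the second. *)

From Stdlib Require Import ZArith Lia List Setoid Morphisms Bool.
Import ListNotations.

Lemma eval_subst {A : Type} (op : A -> A -> A) (v : nat -> A) (s : nat -> term) (t : term) :
  eval op v (subst s t) = eval op (fun n => eval op v (s n)) t.
Proof. induction t; simpl; congruence. Qed.

Lemma derivable_sound {A : Type} (op : A -> A -> A) (E : identity -> Prop) :
  (forall e, E e -> satisfies op e) ->
  forall s t, derivable E s t -> forall v, eval op v s = eval op v t.
Proof.
  intros HE s t H; induction H; intro v.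
  - apply HE; assumption.
  - reflexivity.
  - symmetry; auto.
  - rewrite IHderivable1; auto.
  - rewrite !eval_subst; auto.
  - simpl; rewrite IHderivable1, IHderivable2; reflexivity.
Qed.

Lemma not_derivable_of_model {A : Type} (op : A -> A -> A) (E : identity -> Prop) s t v :
  (forall e, E e -> satisfies op e) -> eval op v s <> eval op v t -> ~ derivable E s t.
Proof. intros HE Hneq H; exact (Hneq (derivable_sound op E HE s t H v)). Qed.

#[export] Instance derivable_equiv (E : identity -> Prop) : Equivalence (derivable E).
Proof.
  split.
  - intro; apply der_refl.
  - intros ? ? ?; apply der_sym; assumption.
  - intros ? ? ? ? ?; eapply der_trans; eassumption.
Qed.

#[export] Instance Op_derivable_proper (E : identity -> Prop) :
  Proper (derivable E ==> derivable E ==> derivable E) Op.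
Proof. intros ? ? ? ? ? ?; apply der_cong; assumption. Qed.

Definition negsub (x y : Z) : Z := (- x - y)%Z.

Lemma basis_3_2_satisfies_sub e : basis_3_2 e -> satisfies Z.sub e.
Proof. intros [-> | ->] v; cbn; lia. Qed.

Lemma basis_3_2_satisfies_negsub e : basis_3_2 e -> satisfies negsub e.
Proof. intros [-> | ->] v; cbn; unfold negsub; lia. Qed.

Lemma basis_3_2_independent : independent basis_3_2.
Proof.
  intros e [-> | ->].
  - apply (not_derivable_of_model (fun _ y : Z => y) _ _ _ (fun n => Z.of_nat n)).
    + intros f [[-> | ->] Hf]; [congruence | intro v; reflexivity].
    + cbn; discriminate.
  - apply (not_derivable_of_model (fun _ _ : Z => 0%Z) _ _ _ (fun _ => 1%Z)).
    + intros f [[-> | ->] Hf]; [intro v; reflexivity | congruence].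
    + cbn; discriminate.
Qed.

Local Infix "≈" := (derivable basis_3_2) (at level 70).

Lemma op_op_cancel a b : Op a (Op a b) ≈ b.
Proof.
  exact (der_subst _ (fun n => match n with 0 => a | _ => b end) _ _
           (der_ax _ id_inv (or_intror eq_refl))).
Qed.

Lemma medial a b c d : Op (Op a b) (Op c d) ≈ Op (Op d b) (Op c a).
Proof.
  exact (der_subst _ (fun n => match n with 0 => a | 1 => b | 2 => c | _ => d end) _ _
           (der_ax _ id_medial_like (or_introl eq_refl))).
Qed.

(* Closes [t ≈ u] when [u] arises from [t] by applying the two identities, in
   either direction, at disjoint positions. *)
Ltac step :=
  solve [repeat first [ apply medial | apply op_op_cancel
                      | symmetry; apply op_op_cancel
                      | apply der_refl | apply der_cong ]].

Definition shift (a b y : term) : term := Op a (Op b y).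

#[export] Instance shift_derivable_proper (E : identity -> Prop) :
  Proper (derivable E ==> derivable E ==> derivable E ==> derivable E) shift.
Proof. intros ? ? Ha ? ? Hb ? ? Hy; unfold shift; rewrite Ha, Hb, Hy; reflexivity. Qed.

Lemma shift_cancel a b y : shift a b (shift b a y) ≈ y.
Proof. unfold shift; rewrite !op_op_cancel; reflexivity. Qed.

Lemma shift_comm a b c d y : shift a b (shift c d y) ≈ shift c d (shift a b y).
Proof.
  unfold shift.
  transitivity (Op (Op y (Op y a)) (Op b (Op c (Op d y)))); [step|].
  transitivity (Op (Op (Op c (Op d y)) (Op y a)) (Op b y)); [step|].
  transitivity (Op (Op (Op c (Op d y)) (Op y a)) (Op c (Op c (Op b y)))); [step|].
  transitivity (Op (Op (Op c (Op b y)) (Op y a)) (Op c (Op c (Op d y)))); [step|].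
  transitivity (Op (Op (Op c (Op b y)) (Op y a)) (Op d y)); [step|].
  transitivity (Op (Op (Op a (Op b y)) (Op y c)) (Op d y)); [step|].
  transitivity (Op (Op y (Op y c)) (Op d (Op a (Op b y)))); [step|].
  step.
Qed.

Lemma op_shift a c d y : Op a (shift c d y) ≈ shift d c (Op a y).
Proof.
  unfold shift.
  rewrite <- (op_op_cancel d (Op a (Op c (Op d y)))) at 1.
  change (Op d (shift d a (shift c d y)) ≈ Op d (Op c (Op a y))).
  rewrite shift_comm; unfold shift; rewrite (op_op_cancel d (Op a y)); reflexivity.
Qed.

Lemma op_expand_l x y z w : Op (Op x y) w ≈ Op (Op (Op z w) y) (Op z x).
Proof. rewrite <- (medial x y z (Op z w)), op_op_cancel; reflexivity. Qed.

Lemma op_square_involutive a z : Op (Op a (Op z z)) (Op z z) ≈ a.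
Proof.
  transitivity (Op (Op z (Op z z)) (Op z a)); [step|].
  transitivity (Op z (Op z a)); step.
Qed.

Lemma shift_square_op a b q z : Op (Op a (Op b b)) (Op b q) ≈ Op (Op a z) (Op (Op b z) q).
Proof.
  transitivity (Op (Op (Op a (Op a a)) (Op b b)) (Op b q)); [step|].
  transitivity (Op (Op (Op b (Op a a)) (Op b a)) (Op b q)); [step|].
  transitivity (Op (Op q (Op b a)) (Op b (Op b (Op a a)))); [step|].
  transitivity (Op (Op q (Op b a)) (Op a a)); [step|].
  transitivity (Op (Op q (Op b a)) (Op (Op b z) (Op (Op b z) (Op a a)))); [step|].
  transitivity (Op (Op (Op (Op b z) (Op a a)) (Op b a)) (Op (Op b z) q)); [step|].
  transitivity (Op (Op (Op a (Op a a)) (Op b (Op b z))) (Op (Op b z) q)); [step|].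
  transitivity (Op (Op (Op a (Op a a)) z) (Op (Op b z) q)); step.
Qed.

Lemma shift_op a b p y z : Op (shift a b p) y ≈ shift (Op a z) (Op b z) (Op p y).
Proof.
  unfold shift.
  rewrite (op_expand_l a (Op b p) b y), (medial b y b p),
          (medial (Op p y) (Op b b) b a).
  apply shift_square_op.
Qed.

Lemma shift_op_op a b z w q : shift (Op (Op a z) w) (Op (Op b z) w) q ≈ shift a b q.
Proof.
  rewrite <- (op_op_cancel z q) at 1.
  rewrite <- (shift_op (Op a z) (Op b z) z (Op z q) w).
  rewrite <- (op_op_cancel z z) at 3.
  rewrite <- (shift_op a b z (Op z z) z).
  unfold shift.
  rewrite (medial (Op a (Op b z)) (Op z z) z q),
          (op_shift z a b z), (medial q (Op z z) b (Op a (Op z z))),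
          op_square_involutive.
  reflexivity.
Qed.

Lemma shift_base x z : x ≈ shift (Op x z) (Op z z) z.
Proof. transitivity (Op (Op z z) (Op (Op z z) x)); step. Qed.

Local Notation o := (Var 0).

(* A letter stands for the shift by (c, d) or by (d, c) according to its sign,
   where (c, d) is (x_j, o) or, if shifted, (x_j o, o o).  For j = 0 the term
   x_0 = o is replaced by o o: the variable o itself is the point every normal
   form starts from. *)
Record letter : Type := Letter { letter_var : nat; letter_shifted : bool; letter_pos : bool }.

Definition letter_base (j : nat) : term := match j with 0 => Op o o | _ => Var j end.

Definition act (l : letter) (y : term) : term :=
  let '(Letter j p s) := l in
  let c := if p then Op (letter_base j) o else letter_base j in
  let d := if p then Op o o else o in
  if s then shift c d y else shift d c y.

Definition letter_toggle (l : letter) : letter :=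
  let '(Letter j p s) := l in Letter j (negb p) s.

Definition letter_inv (l : letter) : letter :=
  let '(Letter j p s) := l in Letter j p (negb s).

Definition run (w : list letter) (y : term) : term := fold_right act y w.

Lemma run_app u w y : run (u ++ w) y = run u (run w y).
Proof. apply fold_right_app. Qed.

#[export] Instance act_proper (E : identity -> Prop) l :
  Proper (derivable E ==> derivable E) (act l).
Proof. destruct l as [j p []]; intros y y' H; simpl; rewrite H; reflexivity. Qed.

#[export] Instance run_proper (E : identity -> Prop) w :
  Proper (derivable E ==> derivable E) (run w).
Proof. induction w; intros y y' H; simpl; [|apply act_proper]; auto. Qed.

Lemma act_comm l l' y : act l (act l' y) ≈ act l' (act l y).
Proof. destruct l as [j p []], l' as [j' p' []]; apply shift_comm. Qed.

Lemma act_inv_cancel l y : act l (act (letter_inv l) y) ≈ y.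
Proof. destruct l as [j p []]; apply shift_cancel. Qed.

(* Right multiplication by o maps the pair (c, d) to (c o, d o), and applied
   twice it is the identity by [shift_op_op]. *)
Lemma act_op l p y : Op (act l p) y ≈ act (letter_toggle l) (Op p y).
Proof.
  destruct l as [j [] []]; simpl; rewrite (shift_op _ _ p y o);
    first [reflexivity | apply shift_op_op].
Qed.

Lemma op_act x l y : Op x (act l y) ≈ act (letter_inv l) (Op x y).
Proof. destruct l as [j p []]; apply op_shift. Qed.

Lemma run_op w p y : Op (run w p) y ≈ run (map letter_toggle w) (Op p y).
Proof.
  induction w as [|l w IH]; simpl; [reflexivity|].
  rewrite act_op, IH; reflexivity.
Qed.

Lemma op_run x w y : Op x (run w y) ≈ run (map letter_inv w) (Op x y).
Proof.
  induction w as [|l w IH]; simpl; [reflexivity|].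
  rewrite op_act, IH; reflexivity.
Qed.

Lemma run_pull l u w y : run (u ++ l :: w) y ≈ act l (run (u ++ w) y).
Proof.
  induction u as [|l' u IH]; simpl; [reflexivity|].
  rewrite IH, act_comm; reflexivity.
Qed.

Fixpoint normal_word (t : term) : list letter :=
  match t with
  | Var 0 => []
  | Var j => [Letter j true true]
  | Op s u => map letter_toggle (normal_word s) ++ map letter_inv (normal_word u)
              ++ [Letter 0 true true]
  end.

Lemma normal_word_spec t : t ≈ run (normal_word t) o.
Proof.
  induction t as [[|j]|s IHs u IHu]; simpl.
  - reflexivity.
  - apply shift_base.
  - rewrite !run_app, IHs at 1; rewrite IHu at 1.
    rewrite run_op, op_run.
    apply run_proper, run_proper, shift_base.
Qed.

Definition sign (b : bool) : Z := if b then 1%Z else (-1)%Z.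

Definition letter_exponent (j : nat) (p : bool) (l : letter) : Z :=
  if (letter_var l =? j)%nat && Bool.eqb (letter_shifted l) p then sign (letter_pos l) else 0%Z.

Fixpoint exponent (j : nat) (p : bool) (w : list letter) : Z :=
  match w with
  | [] => 0%Z
  | l :: w' => (letter_exponent j p l + exponent j p w')%Z
  end.

Lemma exponent_app j p u w : exponent j p (u ++ w) = (exponent j p u + exponent j p w)%Z.
Proof. induction u; simpl; lia. Qed.

Lemma letter_exponent_self l :
  letter_exponent (letter_var l) (letter_shifted l) l = sign (letter_pos l).
Proof. unfold letter_exponent; rewrite Nat.eqb_refl, Bool.eqb_reflx; reflexivity. Qed.

Lemma letter_exponent_inv j p l : letter_exponent j p (letter_inv l) = (- letter_exponent j p l)%Z.
Proof.
  destruct l as [j' p' []]; unfold letter_exponent;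
    cbn [letter_inv letter_var letter_shifted letter_pos negb]; destruct (_ && _); reflexivity.
Qed.

Lemma exponent_map_inv j p w : exponent j p (map letter_inv w) = (- exponent j p w)%Z.
Proof. induction w as [|l w IH]; cbn [map exponent]; rewrite ?letter_exponent_inv, ?IH; lia. Qed.

Lemma in_inv_of_exponent_neg l w :
  (sign (letter_pos l) * exponent (letter_var l) (letter_shifted l) w < 0)%Z ->
  In (letter_inv l) w.
Proof.
  destruct l as [j p s]; cbn [letter_var letter_shifted letter_pos letter_inv].
  induction w as [|[j' p' s'] w IH]; cbn [exponent]; [lia|]; intro H.
  unfold letter_exponent in H; cbn [letter_var letter_shifted letter_pos] in H.
  destruct (Nat.eqb_spec j' j), (Bool.eqb_spec p' p), s, s'; cbn [andb sign] in *;
    try (subst; left; reflexivity); right; apply IH; lia.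
Qed.

Definition balanced (w : list letter) : Prop := forall j p, exponent j p w = 0%Z.

Lemma run_balanced w y : balanced w -> run w y ≈ y.
Proof.
  induction w as [[|l w] IH] using (induction_ltof1 _ (@length letter)); intro Hbal;
    [reflexivity|].
  assert (Hin : In (letter_inv l) w).
  { apply in_inv_of_exponent_neg.
    specialize (Hbal (letter_var l) (letter_shifted l)); cbn [exponent] in Hbal.
    rewrite letter_exponent_self in Hbal; destruct (letter_pos l); cbn [sign] in *; lia. }
  apply in_split in Hin as (u & v & ->).
  cbn [run fold_right]; fold (run (u ++ letter_inv l :: v) y).
  rewrite run_pull, act_inv_cancel.
  apply IH.
  - unfold ltof; cbn [length]; rewrite !length_app; cbn [length]; lia.
  - intros j p; specialize (Hbal j p); cbn [exponent] in Hbal.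
    rewrite exponent_app in *; cbn [exponent] in Hbal; rewrite letter_exponent_inv in Hbal; lia.
Qed.

Lemma run_eq_of_exponents w1 w2 y :
  (forall j p, exponent j p w1 = exponent j p w2) -> run w1 y ≈ run w2 y.
Proof.
  intro H.
  assert (Hinv : run (map letter_inv w2) (run w2 y) ≈ y).
  { rewrite <- run_app; apply run_balanced.
    intros j p; rewrite exponent_app, exponent_map_inv; lia. }
  rewrite <- Hinv at 1; rewrite <- run_app.
  apply run_balanced.
  intros j p; rewrite exponent_app, exponent_map_inv, H; lia.
Qed.

Definition indicator (i n : nat) : Z := if (n =? i)%nat then 1%Z else 0%Z.

Lemma eval_act_indicator l y i : i <> 0%nat ->
  eval Z.sub (indicator i) (act l y)
    = (eval Z.sub (indicator i) y + letter_exponent i true l + letter_exponent i false l)%Z /\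
  eval negsub (indicator i) (act l y)
    = (eval negsub (indicator i) y + letter_exponent i true l - letter_exponent i false l)%Z.
Proof.
  intro Hi; destruct i as [|i]; [congruence|].
  destruct l as [[|j] [] []]; unfold letter_exponent, indicator, negsub;
    cbn [act letter_base shift eval letter_var letter_shifted letter_pos Nat.eqb andb eqb sign];
    try destruct (j =? i)%nat; cbn [andb sign]; lia.
Qed.

Lemma eval_act_one l y :
  eval Z.sub (fun _ => 1%Z) (act l y)
    = (eval Z.sub (fun _ => 1%Z) y - (letter_exponent 0 true l + letter_exponent 0 false l))%Z /\
  eval negsub (fun _ => 1%Z) (act l y)
    = (eval negsub (fun _ => 1%Z) y - 3 * (letter_exponent 0 true l - letter_exponent 0 false l))%Z.
Proof.
  destruct l as [[|j] [] []]; unfold letter_exponent, negsub;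
    cbn [act letter_base shift eval letter_var letter_shifted letter_pos Nat.eqb andb eqb sign]; lia.
Qed.

Lemma eval_run_indicator w y i : i <> 0%nat ->
  eval Z.sub (indicator i) (run w y)
    = (eval Z.sub (indicator i) y + exponent i true w + exponent i false w)%Z /\
  eval negsub (indicator i) (run w y)
    = (eval negsub (indicator i) y + exponent i true w - exponent i false w)%Z.
Proof.
  intro Hi; induction w as [|l w [IH1 IH2]]; cbn [run fold_right exponent]; [lia|].
  destruct (eval_act_indicator l (run w y) i Hi) as [E1 E2].
  unfold run in *; rewrite E1, E2, IH1, IH2; lia.
Qed.

Lemma eval_run_one w y :
  eval Z.sub (fun _ => 1%Z) (run w y)
    = (eval Z.sub (fun _ => 1%Z) y - (exponent 0 true w + exponent 0 false w))%Z /\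
  eval negsub (fun _ => 1%Z) (run w y)
    = (eval negsub (fun _ => 1%Z) y - 3 * (exponent 0 true w - exponent 0 false w))%Z.
Proof.
  induction w as [|l w [IH1 IH2]]; cbn [run fold_right exponent]; [lia|].
  destruct (eval_act_one l (run w y)) as [E1 E2].
  unfold run in *; rewrite E1, E2, IH1, IH2; lia.
Qed.

Lemma exponents_eq_of_evals w1 w2 y :
  (forall v, eval Z.sub v (run w1 y) = eval Z.sub v (run w2 y)) ->
  (forall v, eval negsub v (run w1 y) = eval negsub v (run w2 y)) ->
  forall j p, exponent j p w1 = exponent j p w2.
Proof.
  intros Hsub Hneg [|i] p.
  - destruct (eval_run_one w1 y) as [A1 A2], (eval_run_one w2 y) as [B1 B2].
    specialize (Hsub (fun _ => 1%Z)); specialize (Hneg (fun _ => 1%Z)).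
    destruct p; lia.
  - destruct (eval_run_indicator w1 y (S i) ltac:(discriminate)) as [A1 A2],
             (eval_run_indicator w2 y (S i) ltac:(discriminate)) as [B1 B2].
    specialize (Hsub (indicator (S i))); specialize (Hneg (indicator (S i))).
    destruct p; lia.
Qed.

Lemma basis_3_2_complete s t : Sigma24 (s, t) -> s ≈ t.
Proof.
  intros [Hsub Hneg]; cbn [fst snd] in *.
  rewrite (normal_word_spec s), (normal_word_spec t).
  apply run_eq_of_exponents, (exponents_eq_of_evals _ _ o); intro v.
  - rewrite <- !(derivable_sound Z.sub _ basis_3_2_satisfies_sub _ _ (normal_word_spec _)).
    apply Hsub.
  - rewrite <- !(derivable_sound negsub _ basis_3_2_satisfies_negsub _ _ (normal_word_spec _)).
    apply Hneg.
Qed.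

Theorem theorem3p2 : is_basis_Sigma24 basis_3_2 /\ independent basis_3_2.
Proof.
  split; [|exact basis_3_2_independent].
  intros [s t]; split; [intro Hder | apply basis_3_2_complete].
  split; intro v.
  - exact (derivable_sound Z.sub _ basis_3_2_satisfies_sub s t Hder v).
  - exact (derivable_sound negsub _ basis_3_2_satisfies_negsub s t Hder v).
Qed.
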